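(* Let $f:\{0,1\}^n\to\{0,1\}$, let $\mathcal D$ be a distribution on $\{0,1\}^n$, and let $a\in\mathbb C^{2^n}$ be a unit vector with $\mathcal D(x)=|a_x|^2$ for all $x$. Let $\Gamma\in\mathbb R^{2^n\times 2^n}$ be a nonzero adversary matrix for $f$ having $a$ as a principal eigenvector. Consider a memoryless quantum query algorithm accessing $x\sim\mathcal D$, with joint state after $t$ queries $|\psi^t\rangle=\sum_{x}a_x|\psi_x^t\rangle\otimes|x\rangle$, and define $\Delta_t=\|\Gamma\|-|\langle\psi^t|(I\otimes\Gamma)|\psi^t\rangle|$. Then: (i) $\Delta_0=0$; (ii) $\Delta_{t+1}\le\Delta_t+2\max_{i\in\{1,\dots,n\}}\|\Gamma_i\|$ for each $t$; (iii) the average success probability after $T$ queries satisfies $p_{\mathrm{succ}}^{\mathcal D}\le\frac12+\sqrt{\Delta_T/(2\|\Gamma\|)}$. Consequently, $Q_{\mathcal D}(f)\ge\frac{\|\Gamma\|}{36\max_{i}\|\Gamma_i\|}$.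
   Context: Query model: the algorithm space has basis $|i,b\rangle$, $i\in\{1,\dots,n\}$, $b\in\{0,1\}$; $O_x|i,b\rangle=|i,b\oplus x_i\rangle$; a memoryless $T$-query algorithm is a sequence of unitaries $U_0,\dots,U_T$, with $|\psi_x^t\rangle=U_tO_x\cdots U_1O_xU_0|\mathrm{init}\rangle$ for a fixed basis state $|\mathrm{init}\rangle$; its output is the measured value register of the final state. The average success probability is $p_{\mathrm{succ}}^{\mathcal D}=\sum_x\mathcal D(x)\|(I\otimes|f(x)\rangle\langle f(x)|)|\psi_x^T\rangle\|^2$, and $Q_{\mathcal D}(f)$ is the smallest $T$ such that some $T$-query algorithm has $p_{\mathrm{succ}}^{\mathcal D}\ge 2/3$. An adversary matrix for $f$ is a real symmetric $\Gamma\in\mathbb R^{2^n\times2^n}$ (rows/columns indexed by $\{0,1\}^n$) with $\Gamma_{x,y}=0$ whenever $f(x)=f(y)$. For $i\in\{1,\dots,n\}$, $\Gamma_i$ is the matrix with $(\Gamma_i)_{x,y}=\Gamma_{x,y}$ if $x_i\ne y_i$ and $0$ otherwise. $\|\cdot\|$ on matrices is the spectral norm; a principal eigenvector is a unit eigenvector whose eigenvalue has absolute value $\|\Gamma\|$. *)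

From HB Require Import structures.
From mathcomp Require Import all_boot all_order all_algebra.
From mathcomp Require Import boolp classical_sets reals.
From mathcomp Require Import complex.
Set Implicit Arguments. Unset Strict Implicit. Unset Printing Implicit Defensive.
Import Order.TTheory GRing.Theory Num.Theory.
Local Open Scope ring_scope.

Section QueryDefs.
Variable R : realType.
Local Notation C := R[i].

Definition cabs (z : C) : R := ComplexField.Normc.normc z.
Definition cconj (z : C) : C := conjc z.

Definition input (n : nat) := {ffun 'I_n -> bool}.

Definition rvnorm (X : finType) (v : X -> R) : R := Num.sqrt (\sum_(x : X) v x ^+ 2).
Definition rmatvec (X : finType) (M : X -> X -> R) (v : X -> R) : X -> R :=
  fun x => \sum_(y : X) M x y * v y.

Definition specnorm (X : finType) (M : X -> X -> R) : R :=
  sup [set r : R | exists v : X -> R, rvnorm v = 1 /\ r = rvnorm (rmatvec M v)].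

Definition adversary_matrix n (f : input n -> bool) (G : input n -> input n -> R) :=
  (forall x y, G x y = G y x) /\ (forall x y, f x = f y -> G x y = 0).

Definition Gamma_i n (G : input n -> input n -> R) (i : 'I_n) : input n -> input n -> R :=
  fun x y => if x i != y i then G x y else 0.

Definition maxGi n (G : input n -> input n -> R) : R :=
  \big[Num.max/0]_(i < n) specnorm (Gamma_i G i).

Definition cinner (X : finType) (u v : X -> C) : C := \sum_(x : X) cconj (u x) * v x.
Definition cnorm2 (X : finType) (v : X -> C) : R := \sum_(x : X) cabs (v x) ^+ 2.
Definition cmatvec (X : finType) (M : X -> X -> C) (v : X -> C) : X -> C :=
  fun x => \sum_(y : X) M x y * v y.
Definition basis_vec (X : finType) (s : X) : X -> C := fun x => (x == s)%:R.

Definition unitary (X : finType) (U : X -> X -> C) :=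
  (forall j k, \sum_(i : X) cconj (U i j) * U i k = (j == k)%:R) /\
  (forall j k, \sum_(i : X) U j i * cconj (U k i) = (j == k)%:R).

Definition principal_eigvec n (G : input n -> input n -> R) (a : input n -> C) :=
  cnorm2 a = 1 /\
  exists lam : C, cabs lam = specnorm G /\
    forall x, \sum_(y : input n) (G x y)%:C%C * a y = lam * a x.

(** algorithm space: basis |i,b>, i in 'I_n, b in {0,1} *)
Definition aspace n := ('I_n * bool)%type.

Definition oracle n (x : input n) (phi : aspace n -> C) : aspace n -> C :=
  fun s => phi (s.1, s.2 (+) x s.1).

Fixpoint qstate n (U : nat -> aspace n -> aspace n -> C) (init : aspace n)
  (x : input n) (t : nat) : aspace n -> C :=
  match t with
  | 0 => cmatvec (U 0%N) (basis_vec init)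
  | t'.+1 => cmatvec (U t) (oracle x (qstate U init x t'))
  end.

Definition memoryless_alg n (T : nat) (U : nat -> aspace n -> aspace n -> C) :=
  forall t, (t <= T)%N -> unitary (U t).

Definition joint_state n (a : input n -> C) U init t :
  (aspace n * input n)%type -> C :=
  fun z => a z.2 * qstate U init z.2 t z.1.

Definition IxGamma n (G : input n -> input n -> R)
  (Phi : (aspace n * input n)%type -> C) : (aspace n * input n)%type -> C :=
  fun z => \sum_(y : input n) (G z.2 y)%:C%C * Phi (z.1, y).

Definition Delta n (G : input n -> input n -> R) (a : input n -> C) U init t : R :=
  specnorm G - cabs (cinner (joint_state a U init t) (IxGamma G (joint_state a U init t))).

Definition proj_value n (c : bool) (phi : aspace n -> C) : aspace n -> C :=
  fun s => if s.2 == c then phi s else 0.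

Definition psucc n (f : input n -> bool) (D : input n -> R) U init T : R :=
  \sum_(x : input n) D x * cnorm2 (proj_value (f x) (qstate U init x T)).

(** some T-query memoryless algorithm succeeds w.p. >= 2/3 under D
    (Q_D(f) is the least such T) *)
Definition solves_avg n (f : input n -> bool) (D : input n -> R) (T : nat) :=
  exists U init, memoryless_alg T U /\ 2 / 3 <= psucc f D U init T.

End QueryDefs.

(* All estimates rest on 2 |<u|(I (x) M)|v>| <= ||M|| (||u||^2 + ||v||^2) for a
   real matrix M.  The progress measure W_t = <psi^t|(I (x) Gamma)|psi^t> equals
   the principal eigenvalue of Gamma at t = 0, because all |psi_x^0> coincide, so
   Delta_0 = 0.  A query changes <psi_x|psi_y> only on the query coordinates i with
   x_i <> y_i, hence W_{t+1} - W_t is a sum over i of forms of I (x) Gamma_i, the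
   i-th one bounded by ||Gamma_i|| times the weight of the query register on i;
   these weights sum to 1.  After T queries Gamma, which vanishes between inputs
   with equal f-values, only pairs the correct part of the final state, of weight
   the success probability p, with the incorrect part, of weight 1 - p; hence
   |W_T| <= ||Gamma|| (1/2 + 2 p (1 - p)), that is Delta_T >= 2 ||Gamma|| (p - 1/2)^2. *)

From HB Require Import structures.
From mathcomp Require Import all_boot all_order all_algebra.
From mathcomp Require Import boolp classical_sets reals.
From mathcomp Require Import complex.
From mathcomp Require Import ring lra.
Import Order.TTheory GRing.Theory Num.Theory.
Local Open Scope ring_scope.
Set Implicit Arguments. Unset Strict Implicit. Unset Printing Implicit Defensive.

Section ComplexFacts.
Variable R : realType.
Local Notation C := R[i].
Local Notation Re := (@complex.Re R).
Local Notation Im := (@complex.Im R).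
Implicit Types (z w : C) (m : R).

Lemma cabs_sqr z : cabs z ^+ 2 = Re z ^+ 2 + Im z ^+ 2.
Proof. by case: z => a b; rewrite /cabs /= sqr_sqrtr // addr_ge0 ?sqr_ge0. Qed.

Lemma cabs_ge0 z : 0 <= cabs z.
Proof. by case: z => a b; rewrite /cabs /= sqrtr_ge0. Qed.

Lemma cabs0 : cabs (0 : C) = 0.
Proof. exact: ComplexField.Normc.normc0. Qed.

Lemma cabs_eq0 z : cabs z = 0 -> z = 0.
Proof. exact: ComplexField.Normc.eq0_normc. Qed.

Lemma cabsM z w : cabs (z * w) = cabs z * cabs w.
Proof. exact: ComplexField.Normc.normcM. Qed.

Lemma cabsD z w : cabs (z + w) <= cabs z + cabs w.
Proof. exact: le_normcD. Qed.

Lemma cabsN z : cabs (- z) = cabs z.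
Proof. exact: normcN. Qed.

Lemma cabsB z w : cabs (z - w) <= cabs z + cabs w.
Proof. by rewrite -(cabsN w) cabsD. Qed.

Lemma cabs_sum (I : finType) (F : I -> C) : cabs (\sum_i F i) <= \sum_i cabs (F i).
Proof.
elim/big_ind2: _ => [|z1 r1 z2 r2 h1 h2|//]; first by rewrite cabs0.
by rewrite (le_trans (cabsD _ _)) // lerD.
Qed.

Lemma cabs_cconj z : cabs (cconj z) = cabs z.
Proof. by case: z => a b; rewrite /cabs /cconj /= sqrrN. Qed.

Lemma cabs_real m : cabs m%:C%C = `|m|.
Proof. by rewrite /cabs /= expr0n addr0 sqrtr_sqr. Qed.

Lemma cconjM z w : cconj (z * w) = cconj z * cconj w.
Proof. exact: rmorphM. Qed.

Lemma mul_cconj_self z : cconj z * z = (cabs z ^+ 2)%:C%C.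
Proof.
rewrite cabs_sqr; case: z => a b /=.
by apply/eqP; rewrite eq_complex /=; apply/andP; split; apply/eqP; ring.
Qed.

Lemma Re_cconjM z w : Re (cconj z * w) = Re z * Re w + Im z * Im w.
Proof. by case: z => a b; case: w => c d /=; ring. Qed.

Lemma Re_sum (I : finType) (F : I -> C) : Re (\sum_i F i) = \sum_i Re (F i).
Proof. exact: (raddf_sum (Re : Rcomplex R -> R)). Qed.

Lemma Im_sum (I : finType) (F : I -> C) : Im (\sum_i F i) = \sum_i Im (F i).
Proof. exact: (raddf_sum (Im : Rcomplex R -> R)). Qed.

Lemma Re_realM m z : Re (m%:C%C * z) = m * Re z.
Proof. by case: z => c d /=; ring. Qed.

Lemma Im_realM m z : Im (m%:C%C * z) = m * Im z.
Proof. by case: z => c d /=; ring. Qed.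

End ComplexFacts.

Section SpectralNorm.
Local Open Scope classical_set_scope.
Variables (R : realType) (X : finType).
Implicit Types (M : X -> X -> R) (p q v : X -> R).

Lemma sumsq_ge0 v : 0 <= \sum_x v x ^+ 2.
Proof. by apply: sumr_ge0 => x _; rewrite sqr_ge0. Qed.

Lemma sumsq_eq0 v : \sum_x v x ^+ 2 = 0 -> forall x, v x = 0.
Proof.
move=> /eqP; rewrite psumr_eq0 => [/allP v0 x|x _]; last exact: sqr_ge0.
by apply/eqP; rewrite -sqrf_eq0; exact: v0 (mem_index_enum x).
Qed.

Lemma rvnorm_ge0 v : 0 <= rvnorm v.
Proof. exact: sqrtr_ge0. Qed.

Lemma rvnorm_sqr v : rvnorm v ^+ 2 = \sum_x v x ^+ 2.
Proof. by rewrite sqr_sqrtr // sumsq_ge0. Qed.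

Lemma rvnorm_delta (y : X) : rvnorm (fun x => (x == y)%:R : R) = 1.
Proof.
rewrite /rvnorm (bigD1 y) //= eqxx expr1n big1 ?addr0 ?sqrtr1 // => x /negbTE ->.
by rewrite expr0n.
Qed.

Lemma rmatvec_delta M (x y : X) : rmatvec M (fun z => (z == y)%:R) x = M x y.
Proof.
rewrite /rmatvec (bigD1 y) //= eqxx mulr1 big1 ?addr0 // => z /negbTE ->.
by rewrite mulr0.
Qed.

Lemma rvnorm_rmatvec_unit M v : rvnorm v = 1 -> rvnorm (rmatvec M v) <= specnorm M.
Proof.
move=> v1; apply: sup_upper_bound; last by exists v.
split; first by exists (rvnorm (rmatvec M v)), v.
exists (Num.sqrt (\sum_x (\sum_y `|M x y|) ^+ 2)) => _ [w [w1 ->]].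
have w_le1 y : `|w y| <= 1.
  have w_sumsq : \sum_x w x ^+ 2 = 1 by rewrite -rvnorm_sqr w1 expr1n.
  rewrite -(expr_le1 (n := 2)) // real_normK ?num_real // -w_sumsq.
  by rewrite (bigD1 y) //= lerDl; apply: sumr_ge0 => x _; exact: sqr_ge0.
rewrite ler_wsqrtr // ler_sum // => x _.
rewrite -real_normK ?num_real // ler_pXn2r ?nnegrE ?sumr_ge0 //.
rewrite (le_trans (ler_norm_sum _ _ _)) // ler_sum // => y _.
by rewrite normrM ler_piMr.
Qed.

Lemma specnorm_ge0 M : 0 <= specnorm M.
Proof.
have [[v v1]|no_unit] := pselect (exists v, rvnorm v = 1).
  exact: le_trans (rvnorm_ge0 _) (rvnorm_rmatvec_unit M v1).
rewrite /specnorm (_ : [set r | _] = set0) ?sup0 //.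
by apply/seteqP; split => // r [v [v1 _]]; apply: no_unit; exists v.
Qed.

Lemma rvnorm_rmatvec_le M q : rvnorm (rmatvec M q) <= specnorm M * rvnorm q.
Proof.
have [q0|q_neq0] := eqVneq (rvnorm q) 0.
  have qz : forall x, q x = 0 by apply: sumsq_eq0; rewrite -rvnorm_sqr q0 expr0n.
  rewrite q0 mulr0 /rvnorm /rmatvec big1 ?sqrtr0 // => x _.
  by rewrite big1 ?expr0n // => y _; rewrite qz mulr0.
have q_gt0 : 0 < rvnorm q by rewrite lt_def q_neq0 rvnorm_ge0.
pose v x := q x / rvnorm q.
have v1 : rvnorm v = 1.
  rewrite /rvnorm /v; under eq_bigr do rewrite expr_div_n.
  by rewrite -mulr_suml -rvnorm_sqr divff ?sqrtr1 // sqrf_eq0.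
have Mv : rvnorm (rmatvec M v) = rvnorm (rmatvec M q) / rvnorm q.
  rewrite /rvnorm /rmatvec /v.
  under eq_bigr do under eq_bigr do rewrite mulrA.
  under eq_bigr do rewrite -mulr_suml expr_div_n.
  rewrite -mulr_suml sqrtrM ?sumsq_ge0 // sqrtrV ?sqr_ge0 //.
  by rewrite sqrtr_sqr ger0_norm ?rvnorm_ge0.
by rewrite -ler_pdivrMr // -Mv rvnorm_rmatvec_unit.
Qed.

Lemma sumsq_rmatvec_le M q :
  \sum_x rmatvec M q x ^+ 2 <= specnorm M ^+ 2 * \sum_x q x ^+ 2.
Proof.
rewrite -!rvnorm_sqr -exprMn ler_pXn2r ?nnegrE ?rvnorm_ge0 ?mulr_ge0 ?specnorm_ge0 //.
  exact: rvnorm_rmatvec_le.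
exact: rvnorm_ge0.
Qed.

Lemma specnorm_gt0 M x y : M x y != 0 -> 0 < specnorm M.
Proof.
move=> Mxy; have := rvnorm_rmatvec_le M (fun z => (z == y)%:R).
rewrite rvnorm_delta mulr1; apply: lt_le_trans.
rewrite sqrtr_gt0 (bigD1 x) //= rmatvec_delta ltr_pwDl //.
  by rewrite lt_def sqrf_eq0 Mxy sqr_ge0.
by apply: sumr_ge0 => z _; exact: sqr_ge0.
Qed.

(* Expand 0 <= sum_x (s p x - (M q) x)^2 and use |M q|^2 <= s^2 |q|^2, where s = ||M||. *)
Lemma dot_rmatvec_le M p q :
  2 * \sum_x p x * rmatvec M q x <= specnorm M * (\sum_x p x ^+ 2 + \sum_x q x ^+ 2).
Proof.
set s := specnorm M; set w := rmatvec M q.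
have s_ge0 : 0 <= s := specnorm_ge0 M.
have Mq_le : \sum_x w x ^+ 2 <= s ^+ 2 * \sum_x q x ^+ 2 := sumsq_rmatvec_le M q.
have [s0|s_neq0] := eqVneq s 0.
  have w0 : forall x, w x = 0.
    apply: sumsq_eq0; apply/le_anti; rewrite sumsq_ge0 andbT.
    by move: Mq_le; rewrite s0 expr0n mul0r.
  by rewrite s0 mul0r big1 ?mulr0 // => x _; rewrite w0 mulr0.
have s_gt0 : 0 < s by rewrite lt_def s_neq0 s_ge0.
have expand : \sum_x (s * p x - w x) ^+ 2 =
    s ^+ 2 * \sum_x p x ^+ 2 - 2 * s * \sum_x p x * w x + \sum_x w x ^+ 2.
  transitivity (\sum_x (s ^+ 2 * p x ^+ 2 - 2 * s * (p x * w x) + w x ^+ 2)).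
    by apply: eq_bigr => x _; ring.
  by rewrite big_split /= sumrB -!mulr_sumr.
have := sumsq_ge0 (fun x => s * p x - w x); rewrite /= expand => sq_ge0.
have P_ge0 := sumsq_ge0 p; have Q_ge0 := sumsq_ge0 q; have W_ge0 := sumsq_ge0 w.
by rewrite -(ler_pM2l s_gt0); nra.
Qed.

End SpectralNorm.

Section TensorForm.
Variables (R : realType) (K X : finType).
Local Notation C := R[i].
Local Notation Re := (@complex.Re R).
Local Notation Im := (@complex.Im R).
Implicit Types (M : X -> X -> R) (U V : K -> X -> C).

(* Vectors of C^K (x) C^X are curried: [Iform M U V] is <U|(I (x) M)|V>. *)
Definition Iform M U V : C :=
  \sum_k \sum_x cconj (U k x) * \sum_y (M x y)%:C%C * V k y.
Definition Inorm2 U : R := \sum_k \sum_x cabs (U k x) ^+ 2.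

Lemma Inorm2_ge0 U : 0 <= Inorm2 U.
Proof. by apply: sumr_ge0 => k _; apply: sumr_ge0 => x _; exact: sqr_ge0. Qed.

Lemma Inorm2_eq0 U : Inorm2 U = 0 -> forall k x, U k x = 0.
Proof.
move=> /eqP; rewrite psumr_eq0 => [/allP U0 k x|k _]; last first.
  by apply: sumr_ge0 => x _; exact: sqr_ge0.
move: (U0 k (mem_index_enum k)); rewrite psumr_eq0 => [/allP Uk0|y _]; last exact: sqr_ge0.
by apply: cabs_eq0; apply/eqP; rewrite -sqrf_eq0; exact: Uk0 (mem_index_enum x).
Qed.

Lemma Iform_eq0l M U V : Inorm2 U = 0 -> Iform M U V = 0.
Proof.
move=> /Inorm2_eq0 U0; rewrite /Iform big1 // => k _; rewrite big1 // => x _.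
by rewrite U0 /cconj /= oppr0 mul0r.
Qed.

Lemma Iform_eq0r M U V : Inorm2 V = 0 -> Iform M U V = 0.
Proof.
move=> /Inorm2_eq0 V0; rewrite /Iform big1 // => k _; rewrite big1 // => x _.
by rewrite big1 ?mulr0 // => y _; rewrite V0 mulr0.
Qed.

Lemma Re_Iform M U V :
  Re (Iform M U V) = \sum_k (\sum_x Re (U k x) * rmatvec M (fun y => Re (V k y)) x
                           + \sum_x Im (U k x) * rmatvec M (fun y => Im (V k y)) x).
Proof.
rewrite Re_sum; apply: eq_bigr => k _; rewrite Re_sum -big_split.
apply: eq_bigr => x _; rewrite Re_cconjM Re_sum Im_sum /rmatvec.
by congr (_ * _ + _ * _); apply: eq_bigr => y _; rewrite ?Re_realM ?Im_realM.
Qed.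

Lemma Re_Iform_le M U V : 2 * Re (Iform M U V) <= specnorm M * (Inorm2 U + Inorm2 V).
Proof.
rewrite Re_Iform /Inorm2 -big_split mulr_sumr mulr_sumr ler_sum // => k _ /=.
have split_abs W : \sum_x cabs (W k x) ^+ 2 =
    \sum_x Re (W k x) ^+ 2 + \sum_x Im (W k x) ^+ 2.
  by rewrite -big_split; apply: eq_bigr => x _; exact: cabs_sqr.
rewrite !split_abs.
have := dot_rmatvec_le M (fun x => Re (U k x)) (fun y => Re (V k y)).
have := dot_rmatvec_le M (fun x => Im (U k x)) (fun y => Im (V k y)).
move=> /= ImUV ReUV; lra.
Qed.

(* Rotating the phase of V turns the real part of the form into its modulus. *)
Lemma Iform_le M U V : 2 * cabs (Iform M U V) <= specnorm M * (Inorm2 U + Inorm2 V).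
Proof.
set b := Iform M U V.
have [->|b_neq0] := eqVneq b 0.
  by rewrite cabs0 mulr0 mulr_ge0 ?specnorm_ge0 // addr_ge0 ?Inorm2_ge0.
have cb_neq0 : cabs b != 0 by apply: contra b_neq0 => /eqP /cabs_eq0 ->.
pose u := cconj b / (cabs b)%:C%C.
have ub : u * b = (cabs b)%:C%C.
  rewrite /u mulrAC mul_cconj_self -fmorphV /= -rmorphM /=.
  by rewrite expr2 -mulrA divff // mulr1.
have Iform_uV : Iform M U (fun k x => u * V k x) = u * b.
  rewrite /b /Iform mulr_sumr; apply: eq_bigr => k _; rewrite mulr_sumr.
  apply: eq_bigr => x _; rewrite mulrCA; congr (_ * _).
  by rewrite mulr_sumr; apply: eq_bigr => y _; rewrite mulrCA.
have cabs_u : cabs u = 1.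
  rewrite /u cabsM cabs_cconj -fmorphV cabs_real ger0_norm ?divff //.
  by rewrite invr_ge0 cabs_ge0.
have Inorm2_uV : Inorm2 (fun k x => u * V k x) = Inorm2 V.
  by apply: eq_bigr => k _; apply: eq_bigr => x _; rewrite cabsM cabs_u mul1r.
by have := Re_Iform_le M U (fun k x => u * V k x); rewrite Iform_uV ub Inorm2_uV.
Qed.

Lemma Iform_le_scaled M U V (c : R) : c != 0 ->
  2 * cabs (Iform M U V) <= specnorm M * (c ^+ 2 * Inorm2 U + Inorm2 V / c ^+ 2).
Proof.
move=> c_neq0.
have cK : c%:C%C * c^-1%:C%C = 1 :> C by rewrite -rmorphM /= mulfV // rmorph1.
have Iform_scale : Iform M (fun k x => c%:C%C * U k x) (fun k x => c^-1%:C%C * V k x)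
    = Iform M U V.
  apply: eq_bigr => k _; apply: eq_bigr => x _.
  have -> : \sum_y (M x y)%:C%C * (c^-1%:C%C * V k y) =
            c^-1%:C%C * \sum_y (M x y)%:C%C * V k y.
    by rewrite mulr_sumr; apply: eq_bigr => y _; rewrite mulrCA.
  by rewrite cconjM /cconj conjc_real mulrCA !mulrA [_ * c%:C%C]mulrC cK mul1r.
have Inorm2_scale (d : R) W : Inorm2 (fun k x => d%:C%C * W k x) = d ^+ 2 * Inorm2 W.
  rewrite /Inorm2 mulr_sumr; apply: eq_bigr => k _; rewrite mulr_sumr.
  by apply: eq_bigr => x _; rewrite cabsM cabs_real exprMn real_normK ?num_real.
have := Iform_le M (fun k x => c%:C%C * U k x) (fun k x => c^-1%:C%C * V k x).
by rewrite Iform_scale !Inorm2_scale exprVn [_^-1 * _]mulrC.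
Qed.

Lemma Iform_gram M (a : X -> C) (Psi Phi : X -> K -> C) :
  Iform M (fun k x => a x * Psi x k) (fun k x => a x * Phi x k) =
  \sum_x \sum_y (M x y)%:C%C * (cconj (a x) * a y) * cinner (Psi x) (Phi y).
Proof.
transitivity (\sum_k \sum_x \sum_y
    (M x y)%:C%C * (cconj (a x) * a y) * (cconj (Psi x k) * Phi y k)).
  apply: eq_bigr => k _; apply: eq_bigr => x _; rewrite mulr_sumr.
  by apply: eq_bigr => y _; rewrite cconjM; ring.
rewrite exchange_big; apply: eq_bigr => x _; rewrite exchange_big.
by apply: eq_bigr => y _; rewrite /cinner mulr_sumr.
Qed.

End TensorForm.

Section Queries.
Variable R : realType.
Local Notation C := R[i].

Lemma cinner_cnorm2 (X : finType) (v : X -> C) : cinner v v = (cnorm2 v)%:C%C.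
Proof.
by rewrite /cinner /cnorm2 rmorph_sum; apply: eq_bigr => x _; rewrite mul_cconj_self.
Qed.

Lemma cinner_basis_vec (X : finType) (s : X) :
  cinner (basis_vec R s) (basis_vec R s) = 1.
Proof.
rewrite /cinner (bigD1 s) //= /basis_vec eqxx /cconj conjc1 mulr1 big1 ?addr0 //.
by move=> x /negbTE ->; rewrite mulr0.
Qed.

Lemma unitary_cinner (X : finType) (M : X -> X -> C) (phi chi : X -> C) :
  unitary M -> cinner (cmatvec M phi) (cmatvec M chi) = cinner phi chi.
Proof.
move=> [M_isometry _]; rewrite /cinner /cmatvec.
transitivity (\sum_s \sum_j \sum_k cconj (M s j) * cconj (phi j) * (M s k * chi k)).
  apply: eq_bigr => s _; rewrite /cconj rmorph_sum mulr_suml; apply: eq_bigr => j _.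
  by rewrite mulr_sumr rmorphM.
rewrite exchange_big; apply: eq_bigr => j _; rewrite exchange_big /=.
transitivity (\sum_k cconj (phi j) * chi k * \sum_s cconj (M s j) * M s k).
  by apply: eq_bigr => k _; rewrite mulr_sumr; apply: eq_bigr => s _; ring.
rewrite (bigD1 j) //= M_isometry eqxx mulr1 big1 ?addr0 // => k /negbTE kj.
by rewrite M_isometry eq_sym kj mulr0.
Qed.

Lemma cinner_aspace n (phi chi : aspace n -> C) :
  cinner phi chi = \sum_(i < n) (cconj (phi (i, true)) * chi (i, true) +
                                 cconj (phi (i, false)) * chi (i, false)).
Proof.
rewrite /cinner (eq_bigr (fun p => cconj (phi (p.1, p.2)) * chi (p.1, p.2))).
  rewrite -(pair_bigA _ (fun i b => cconj (phi (i, b)) * chi (i, b))) /=.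
  by apply: eq_bigr => i _; rewrite big_bool.
by case.
Qed.

Lemma cnorm2_aspace n (phi : aspace n -> C) :
  cnorm2 phi = \sum_(i < n) \sum_(b : bool) cabs (phi (i, b)) ^+ 2.
Proof.
rewrite /cnorm2 (eq_bigr (fun p => cabs (phi (p.1, p.2)) ^+ 2)) ?pair_bigA //.
by case.
Qed.

Lemma cinner_oracleB n (x y : input n) (phi chi : aspace n -> C) :
  cinner (oracle x phi) (oracle y chi) - cinner phi chi =
  \sum_(i < n) (if x i != y i then
     cconj (phi (i, true)) * (chi (i, false) - chi (i, true)) +
     cconj (phi (i, false)) * (chi (i, true) - chi (i, false)) else 0).
Proof.
rewrite !cinner_aspace -sumrB; apply: eq_bigr => i _.
by rewrite /oracle /=; case: (x i); case: (y i) => /=; ring.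
Qed.

Lemma cinner_oracle n (x : input n) (phi : aspace n -> C) :
  cinner (oracle x phi) (oracle x phi) = cinner phi phi.
Proof.
by apply/eqP; rewrite -subr_eq0 cinner_oracleB big1 // => i _; rewrite eqxx.
Qed.

Lemma qstate0_cinner n (U : nat -> aspace n -> aspace n -> C) (init : aspace n)
    (x y : input n) :
  unitary (U 0%N) -> cinner (qstate U init x 0) (qstate U init y 0) = 1.
Proof. by move=> U0; rewrite /= unitary_cinner // cinner_basis_vec. Qed.

Lemma cnorm2_qstate n T (U : nat -> aspace n -> aspace n -> C) (init : aspace n)
    (x : input n) t :
  memoryless_alg T U -> (t <= T)%N -> cnorm2 (qstate U init x t) = 1.
Proof.
move=> HU leT; apply: (@complexI R); rewrite -cinner_cnorm2 rmorph1.
elim: t leT => [|t IH] leT; first exact/qstate0_cinner/HU.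
rewrite /= unitary_cinner; last exact: HU.
by rewrite cinner_oracle IH // ltnW.
Qed.

End Queries.

Lemma le_half_add_sqrt (R : rcfType) (s d p : R) : 0 < s ->
  2 * s * (p - 1 / 2) ^+ 2 <= d -> p <= 1 / 2 + Num.sqrt (d / (2 * s)).
Proof.
move=> s_gt0 bias; have [p_le|p_gt] := lerP p (1 / 2).
  by have := sqrtr_ge0 (d / (2 * s)); lra.
have : (p - 1 / 2) ^+ 2 <= d / (2 * s) by rewrite ler_pdivlMr ?mulr_gt0 //; lra.
by move=> /ler_wsqrtr; rewrite sqrtr_sqr ger0_norm; lra.
Qed.

Section AdversaryBound.
Variables (R : realType) (n : nat) (G : input n -> input n -> R) (a : input n -> R[i]).
Variables (U : nat -> aspace n -> aspace n -> R[i]) (init : aspace n).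
Local Notation psi x t := (qstate U init x t).
Local Notation W t :=
  (cinner (joint_state a U init t) (IxGamma G (joint_state a U init t))).

Lemma W_Iform t :
  W t = Iform G (fun s x => a x * psi x t s) (fun s x => a x * psi x t s).
Proof. by rewrite /Iform pair_bigA. Qed.

Lemma W_gram t : W t =
  \sum_x \sum_y (G x y)%:C%C * (cconj (a x) * a y) * cinner (psi x t) (psi y t).
Proof. by rewrite W_Iform (Iform_gram G a (fun x => psi x t) (fun x => psi x t)). Qed.

Lemma Delta0 : principal_eigvec G a -> unitary (U 0%N) -> Delta G a U init 0 = 0.
Proof.
move=> [a_unit [lam [lam_norm a_eigen]]] U0.
suff W0 : W 0 = lam by rewrite /Delta W0 lam_norm subrr.
rewrite W_gram (eq_bigr (fun x => cconj (a x) * \sum_y (G x y)%:C%C * a y)).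
  under eq_bigr do rewrite a_eigen mulrCA.
  by rewrite -mulr_sumr -[\sum_x _]/(cinner a a) cinner_cnorm2 a_unit mulr1.
move=> x _; rewrite mulr_sumr; apply: eq_bigr => y _.
by rewrite qstate0_cinner //; ring.
Qed.

Section QueryStep.
Variables (T t : nat).
Hypotheses (HU : memoryless_alg T U) (ltT : (t < T)%N).
Let u (i : 'I_n) (b : bool) (x : input n) := a x * psi x t (i, b).
Let u' (i : 'I_n) (b : bool) (x : input n) := a x * psi x t (i, ~~ b).

Lemma W_step : W t.+1 - W t =
  \sum_(i < n) (Iform (Gamma_i G i) (u i) (u' i) - Iform (Gamma_i G i) (u i) (u i)).
Proof.
have gram_diff i : Iform (Gamma_i G i) (u i) (u' i) - Iform (Gamma_i G i) (u i) (u i) =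
    \sum_x \sum_y (Gamma_i G i x y)%:C%C * (cconj (a x) * a y) *
      (cinner (fun b => psi x t (i, b)) (fun b => psi y t (i, ~~ b)) -
       cinner (fun b => psi x t (i, b)) (fun b => psi y t (i, b))).
  rewrite (Iform_gram _ a (fun x b => psi x t (i, b)) (fun y b => psi y t (i, ~~ b))).
  rewrite (Iform_gram _ a (fun x b => psi x t (i, b)) (fun y b => psi y t (i, b))).
  rewrite -sumrB; apply: eq_bigr => x _; rewrite -sumrB; apply: eq_bigr => y _.
  by rewrite mulrBr.
under [RHS]eq_bigr do rewrite gram_diff.
rewrite exchange_big !W_gram -sumrB; apply: eq_bigr => x _.
rewrite exchange_big -sumrB; apply: eq_bigr => y _.
rewrite /= !unitary_cinner; last exact: HU.
rewrite -mulrBr cinner_oracleB mulr_sumr; apply: eq_bigr => i _.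
rewrite /Gamma_i; case: (x i != y i); last by rewrite rmorph0 !mul0r mulr0.
by rewrite /cinner !big_bool /=; ring.
Qed.

Hypothesis a_unit : cnorm2 a = 1.

Lemma Inorm2_query_weights : \sum_(i < n) Inorm2 (u i) = 1.
Proof.
rewrite -a_unit /Inorm2 /cnorm2.
transitivity (\sum_x \sum_(i < n) \sum_(b : bool) cabs (a x * psi x t (i, b)) ^+ 2).
  by rewrite [RHS]exchange_big; apply: eq_bigr => i _; rewrite [RHS]exchange_big.
apply: eq_bigr => x _.
under eq_bigr do under eq_bigr do rewrite cabsM exprMn.
under eq_bigr do rewrite -mulr_sumr.
by rewrite -mulr_sumr -cnorm2_aspace (cnorm2_qstate init x HU (ltnW ltT)) mulr1.
Qed.

Lemma W_step_le : cabs (W t.+1 - W t) <= 2 * maxGi G.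
Proof.
rewrite W_step (le_trans (cabs_sum _)) //.
apply: (@le_trans _ _ (\sum_(i < n) 2 * maxGi G * Inorm2 (u i))); last first.
  by rewrite -mulr_sumr Inorm2_query_weights mulr1.
apply: ler_sum => i _.
have flip : Inorm2 (u' i) = Inorm2 (u i) by rewrite /Inorm2 !big_bool /= addrC.
have := Iform_le (Gamma_i G i) (u i) (u' i); rewrite flip.
have := Iform_le (Gamma_i G i) (u i) (u i).
have := cabsB (Iform (Gamma_i G i) (u i) (u' i)) (Iform (Gamma_i G i) (u i) (u i)).
have : specnorm (Gamma_i G i) * Inorm2 (u i) <= maxGi G * Inorm2 (u i).
  by rewrite ler_wpM2r ?Inorm2_ge0 // le_bigmax.
lra.
Qed.

Lemma Delta_step : Delta G a U init t.+1 <= Delta G a U init t + 2 * maxGi G.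
Proof.
have := cabsB (W t.+1) (W t.+1 - W t); rewrite opprB addrC subrK.
have := W_step_le; rewrite /Delta; lra.
Qed.

End QueryStep.

Lemma Delta_le_queries T : principal_eigvec G a -> memoryless_alg T U ->
  Delta G a U init T <= 2 * T%:R * maxGi G.
Proof.
move=> Hprin HU.
suff Delta_le t : (t <= T)%N -> Delta G a U init t <= 2 * t%:R * maxGi G by exact: Delta_le.
elim: t => [|t IH] leT; first by rewrite (Delta0 Hprin (HU 0%N isT)) /= mulr0 mul0r.
have := Delta_step HU leT Hprin.1; have := IH (ltnW leT).
rewrite -addn1 natrD; lra.
Qed.

Section Measurement.
Variables (f : input n -> bool) (D : input n -> R) (T : nat).
Hypotheses (HU : memoryless_alg T U) (a_unit : cnorm2 a = 1)
  (HDa : forall x, D x = cabs (a x) ^+ 2).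
Let good s x := a x * proj_value (f x) (psi x T) s.
Let bad s x := a x * proj_value (~~ f x) (psi x T) s.
Local Notation p := (psucc f D U init T).

Lemma W_good_bad : adversary_matrix f G -> W T = Iform G good bad + Iform G bad good.
Proof.
move=> [_ G_f0]; rewrite W_Iform /Iform -big_split; apply: eq_bigr => s _.
rewrite -big_split; apply: eq_bigr => x _ /=.
rewrite !mulr_sumr -big_split; apply: eq_bigr => y _ /=.
have [fxy|fxy] := eqVneq (f x) (f y).
  by rewrite G_f0 // rmorph0 !mul0r !mulr0 addr0.
rewrite /good /bad /proj_value; case: s => i b /=.
move: fxy; case: (f x); case: (f y); case: b => //= _;
  by rewrite ?mulr0 /cconj ?conjc0 ?mulr0 ?mul0r ?addr0 ?add0r.
Qed.

Lemma Inorm2_good : Inorm2 good = p.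
Proof.
rewrite /Inorm2 /psucc exchange_big; apply: eq_bigr => x _.
rewrite HDa /cnorm2 mulr_sumr; apply: eq_bigr => s _.
by rewrite cabsM exprMn.
Qed.

Lemma Inorm2_bad : Inorm2 bad = 1 - p.
Proof.
rewrite -Inorm2_good -a_unit; apply/eqP; rewrite eq_sym subr_eq; apply/eqP.
rewrite /Inorm2 [in RHS]exchange_big [X in _ + X]exchange_big -big_split.
apply: eq_bigr => x _ /=; rewrite -big_split /=.
rewrite -[LHS]mulr1 -(cnorm2_qstate init x HU (leqnn T)) /cnorm2 mulr_sumr.
apply: eq_bigr => s _; rewrite !cabsM !exprMn -mulrDr; congr (_ * _).
rewrite /proj_value; case: s => i b /=; case: b; case: (f x) => /=;
  by rewrite expr0n /= addr0 sqrtr0 expr0n /= ?addr0 ?add0r.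
Qed.

(* The weight c^2 = 2 (1 - p) balances the two terms of [Iform_le_scaled]. *)
Lemma cabs_W_measured_le : adversary_matrix f G ->
  cabs (W T) <= specnorm G * (1 / 2 + 2 * p * (1 - p)).
Proof.
move=> adv; rewrite W_good_bad //.
have s_ge0 := specnorm_ge0 G.
have p_le1 : p <= 1 by rewrite -subr_ge0 -Inorm2_bad Inorm2_ge0.
have [p1|p_neq1] := eqVneq p 1.
  have bad0 : Inorm2 bad = 0 by rewrite Inorm2_bad p1 subrr.
  rewrite Iform_eq0r // Iform_eq0l // addr0 cabs0 p1 subrr mulr0 addr0.
  by rewrite mulr_ge0 // divr_ge0.
have p_lt1 : 0 < 1 - p by rewrite subr_gt0 lt_neqAle p_neq1.
pose c := Num.sqrt (2 * (1 - p)).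
have c2 : c ^+ 2 = 2 * (1 - p) by rewrite sqr_sqrtr // mulr_ge0 // ltW.
have c_neq0 : c != 0 by apply/eqP => c0; move: c2; rewrite c0 expr0n /=; lra.
have half : (1 - p) / (2 * (1 - p)) = 1 / 2 by field; lra.
have := Iform_le_scaled G good bad c_neq0.
rewrite c2 Inorm2_good Inorm2_bad half.
have := Iform_le_scaled G bad good (invr_neq0 c_neq0).
rewrite exprVn c2 invrK Inorm2_good Inorm2_bad [_^-1 * (1 - p)]mulrC half.
have := cabsD (Iform G good bad) (Iform G bad good).
nra.
Qed.

Lemma Delta_ge_bias : adversary_matrix f G ->
  2 * specnorm G * (p - 1 / 2) ^+ 2 <= Delta G a U init T.
Proof.
move=> adv; have := cabs_W_measured_le adv; rewrite /Delta.
have -> : 2 * specnorm G * (p - 1 / 2) ^+ 2 =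
          specnorm G - specnorm G * (1 / 2 + 2 * p * (1 - p)) by field.
lra.
Qed.

End Measurement.

End AdversaryBound.

Unset Implicit Arguments.
Theorem theorem5p2 (R : realType) (n : nat) (f : input n -> bool)
  (D : input n -> R) (a : input n -> R[i]) (G : input n -> input n -> R)
  (HDge0 : forall x, 0 <= D x) (HDsum : \sum_(x : input n) D x = 1)
  (HDa : forall x, D x = cabs (a x) ^+ 2)
  (Hadv : adversary_matrix f G) (HGnz : exists x y, G x y != 0)
  (Hprin : principal_eigvec G a) :
  (forall (T : nat) (U : nat -> aspace n -> aspace n -> R[i]) (init : aspace n),
     memoryless_alg T U ->
     [/\ Delta G a U init 0 = 0,
         (forall t : nat, (t < T)%N ->
            Delta G a U init t.+1 <= Delta G a U init t + 2 * maxGi G) &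
         psucc f D U init T <=
           1 / 2 + Num.sqrt (Delta G a U init T / (2 * specnorm G))]) /\
  (forall T : nat, solves_avg f D T -> specnorm G / (36 * maxGi G) <= T%:R).
Proof.
(* [HDge0] and [HDsum] are implied by [HDa] and the normalisation of [a]. *)
have a_unit : cnorm2 a = 1 := Hprin.1.
have s_gt0 : 0 < specnorm G by case: HGnz => x [y]; exact: specnorm_gt0.
split=> [T U init HU | T [U [init [HU succ]]]].
  split; first exact: Delta0 init Hprin (HU 0%N isT).
    by move=> t ltT; have := Delta_step G init HU ltT a_unit; apply.
  exact/le_half_add_sqrt/(Delta_ge_bias init HU a_unit HDa Hadv).
have bias := Delta_ge_bias init HU a_unit HDa Hadv.
have linear := Delta_le_queries init Hprin HU.
have bias_ge : 1 / 36 <= (psucc f D U init T - 1 / 2) ^+ 2 by nra.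
have Delta_ge : specnorm G / 18 <= Delta G a U init T by nra.
(* When max_i ||Gamma_i|| = 0 the bound is ||Gamma|| / 0 = 0 in MathComp. *)
have [->|m_neq0] := eqVneq (maxGi G) 0; first by rewrite mulr0 invr0 mulr0.
have m_gt0 : 0 < maxGi G by rewrite lt_def m_neq0 bigmax_ge_id.
by rewrite ler_pdivrMr ?mulr_gt0 //; lra.
Qed.
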